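(* Let $N=(V,A)$ be a phylogenetic network on $X$. Then $$l(N)=p(N)=t(N)=(|V|-|X|)-m(\mathcal{G}_N),$$ where $m(\mathcal{G}_N)$ is the size of a maximum matching of $\mathcal{G}_N$.
   Context: $X$ is a nonempty finite set. A phylogenetic network on $X$ is a rooted acyclic digraph with no parallel arcs such that: the unique root has out-degree at least one; $X$ is exactly the set of vertices of out-degree zero (leaves), each of in-degree one; every other vertex either has in-degree one and out-degree at least two (a tree vertex) or in-degree at least two and out-degree one (a reticulation). If $|X|=1$, the network may also consist of the single vertex in $X$. A phylogenetic network $N$ on $X$ is tree-based if it can be obtained from some phylogenetic $X$-tree (phylogenetic network with no reticulations) $T$ by first taking a subdivision of $T$ (new vertices are attachment points) and then adding new arcs $(u,v)$ where either $u$ and $v$ are both attachment points, or $u$ is a non-leaf vertex of $T$ and $v$ is an attachment point; equivalently, $N$ has a rooted spanning tree with the same root as $N$ all of whose leaves lie in $X$. Attaching a new leaf to $N$ means subdividing an arc of $N$ with a new vertex $u$ and adding a new leaf $y$ and the arc $(u,y)$. Define: $l(N)$ is the minimum, over all spanning trees of $N$ rooted at the root of $N$, of the number of leaves of the spanning tree that lie in $V-X$; $p(N)=d(N)-|X|$ where $d(N)$ is the smallest number of vertex-disjoint directed paths of $N$ that partition $V$; $t(N)$ is the minimum number of new leaves that need to be attached (successively) to $N$ so that the resulting network is tree-based. For a digraph $D=(V,A)$, $\mathcal{G}_D$ is the bipartite graph with vertex bipartition $\{V_1,V_2\}$, where $V_1$ and $V_2$ are two disjoint copies of $V$, having an edge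 between the copy of $u$ in $V_1$ and the copy of $v$ in $V_2$ for each arc $(u,v)\in A$. *)

From HB Require Import structures.
From mathcomp Require Import all_boot.
Set Implicit Arguments. Unset Strict Implicit. Unset Printing Implicit Defensive.

Section Digraph.
Variables (V : finType) (A : rel V).

Definition indeg (v : V) : nat := #|[pred u | A u v]|.
Definition outdeg (v : V) : nat := #|[pred w | A v w]|.

Definition acyclic : Prop := forall u v, A u v -> ~~ connect A v u.

Definition is_root (r : V) : Prop := indeg r = 0.

(* phylogenetic network on X (arcs = the relation A, so no parallel arcs) *)
Definition phylo_net (X : {set V}) : Prop :=
  X != set0 /\ acyclic /\
  exists r, (forall v, is_root v <-> v = r) /\
  ( (#|V| = 1 /\ X = [set: V]) \/
    ( 1 <= outdeg r /\
      (forall v, (v \in X) = (outdeg v == 0)) /\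
      (forall v, v \in X -> indeg v = 1) /\
      (forall v, v != r -> v \notin X ->
         (indeg v = 1 /\ 2 <= outdeg v) \/ (2 <= indeg v /\ outdeg v = 1)) )).

Definition spanning_tree (r : V) (T : {set V * V}) : Prop :=
  (forall e, e \in T -> A e.1 e.2) /\
  (forall v, #|[pred u | (u, v) \in T]| = (if v == r then 0 else 1)) /\
  (forall v, connect (fun x y => (x, y) \in T) r v).

Definition tree_leaf (T : {set V * V}) (v : V) : bool :=
  [forall w, (v, w) \notin T].

Definition bad_leaves (X : {set V}) (T : {set V * V}) : nat :=
  #|[set v | (v \notin X) && tree_leaf T v]|.

Definition path_partition (P : seq (seq V)) : Prop :=
  (forall s, s \in P -> exists x s', s = x :: s' /\ path A x s') /\
  uniq (flatten P) /\ (forall v, v \in flatten P).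

End Digraph.

Definition is_min (P : nat -> Prop) (k : nat) : Prop :=
  P k /\ forall j, P j -> k <= j.

Definition l_val (V : finType) (A : rel V) (X : {set V}) (k : nat) : Prop :=
  is_min (fun j => exists r T, is_root A r /\ spanning_tree A r T /\
                                bad_leaves X T = j) k.

Definition d_val (V : finType) (A : rel V) (k : nat) : Prop :=
  is_min (fun j => exists P, path_partition A P /\ size P = j) k.

Definition bigraph (U W : finType) := U -> W -> bool.

(* G_D : V_1, V_2 two copies of V, edge (u in V_1, v in V_2) iff (u,v) in A *)
Definition G_of (V : finType) (A : rel V) : bigraph V V := fun u v => A u v.

Definition is_matching (U W : finType) (E : bigraph U W) (M : {set U * W}) : bool :=
  [forall e in M, E e.1 e.2] &&
  [forall e in M, forall f in M, (e != f) ==> ((e.1 != f.1) && (e.2 != f.2))].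

Definition max_matching_size (U W : finType) (E : bigraph U W) : nat :=
  \max_(M : {set U * W} | is_matching E M) #|M|.

(* Networks packaged with their vertex type, to speak of attaching leaves *)
Record net := Net { nV : finType; nA : rel nV; nX : {set nV} }.

(* subdivide arc (a,b) with new vertex u := inr false, attach leaf y := inr true *)
Definition attach_A (N : net) (a b : nV N) : rel (nV N + bool)%type :=
  fun x y =>
    match x, y with
    | inl x, inl y => @nA N x y && ~~ ((x == a) && (y == b))
    | inl x, inr false => x == a
    | inr false, inl y => y == b
    | inr false, inr true => true
    | _, _ => false
    end.

Definition attach (N : net) (a b : nV N) : net :=
  @Net (nV N + bool)%type (attach_A a b)
       ((@inl (nV N) bool) @: @nX N :|: [set inr true]).

Inductive attached : nat -> net -> net -> Prop :=
| attached0 N : attached 0 N N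
| attachedS k N N' (a b : nV N) :
    @nA N a b -> attached k (attach a b) N' -> attached k.+1 N N'.

Definition tree_based (N : net) : Prop :=
  exists r T, is_root (@nA N) r /\ spanning_tree (@nA N) r T /\
              (forall v, tree_leaf T v -> v \in @nX N).

Definition t_val (V : finType) (A : rel V) (X : {set V}) (k : nat) : Prop :=
  is_min (fun j => exists N', attached j (Net A X) N' /\ tree_based N') k.

From HB Require Import structures.
From mathcomp Require Import all_boot.
From mathcomp Require Import zify.
Set Implicit Arguments. Unset Strict Implicit. Unset Printing Implicit Defensive.

(* A rooted spanning tree has in-degree at most one, so one outgoing tree arc at
   each non-leaf gives a matching of G_N; conversely, extending a matching by an
   arbitrary in-arc at every unmatched non-root vertex gives parent pointers
   which, by acyclicity, form a spanning tree in which every matched tail is an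
   inner vertex.  Vertices of X are never tails, hence l(N) = |V| - |X| - m(G_N).
   Likewise the arcs inside the paths of a partition into k paths form a
   matching of size |V| - k, and adding the arcs of a matching one at a time
   joins two distinct paths each time (distinct by acyclicity), so
   d(N) = |V| - m(G_N).  Finally, attaching a leaf below a leaf of a spanning
   tree that lies outside X removes exactly one such leaf, while contracting the
   two new arcs shows that one attachment never lowers l by more than one; so
   t(N) = l(N). *)

Lemma homo_connect (T1 T2 : finType) (e1 : rel T1) (e2 : rel T2) (f : T1 -> T2) :
  {homo f : x y / e1 x y >-> connect e2 x y} ->
  {homo f : x y / connect e1 x y >-> connect e2 x y}.
Proof.
move=> fe x _ /connectP[p xp ->]; elim: p x xp => [|y p IH] x /=.
  by move=> _; exact: connect0.
by case/andP=> /fe xy /IH; exact: connect_trans xy.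
Qed.

Lemma card_pred_inl (T U : finType) (P : pred (T + U)) :
  (forall u, P (inr u) = false) -> #|[pred z | P z]| = #|[pred x | P (inl x)]|.
Proof.
move=> Pr; rewrite -(card_imset [pred x | P (inl x)] (@inl_inj T U)).
apply: eq_card => -[x|u]; rewrite !inE /=.
  by apply/idP/imsetP => [h|[y]]; [exists x|rewrite inE => h [->]].
by rewrite Pr; apply/esym/imsetP => -[].
Qed.

Lemma mem_sorted_last (T : eqType) (R : rel T) s u :
  sorted R s -> u \in s -> (forall z, ~~ R u z) -> exists p, s = rcons p u.
Proof.
move=> + us; case/splitPr: us => p1 [|z p2]; first by exists p1; rewrite cats1.
by case/cat_sorted2 => _ /= /andP[uz _] /(_ z); rewrite uz.
Qed.

Lemma mem_sorted_head (T : eqType) (R : rel T) s w :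
  sorted R s -> w \in s -> (forall z, ~~ R z w) -> exists q, s = w :: q.
Proof.
move=> + ws; case/splitPr: ws => p1 p2; case/lastP: p1 => [|p1 z]; first by exists p2.
by rewrite cat_rcons; case/cat_sorted2 => _ /= /andP[zw _] /(_ z); rewrite zw.
Qed.

Section Matching.
Variables (U W : finType) (E : bigraph U W).

Lemma is_matchingP M :
  is_matching E M <->
  (forall e, e \in M -> E e.1 e.2) /\
  (forall e f, e \in M -> f \in M -> e.1 = f.1 \/ e.2 = f.2 -> e = f).
Proof.
rewrite /is_matching; split.
- case/andP => /forall_inP ME /forall_inP Mu; split=> [e eM|e f eM fM ef]; first exact: ME.
  have /forall_inP/(_ f fM) := Mu e eM.
  by case: eqP => [//|_] /andP[/eqP e1 /eqP e2]; case: ef.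
- case=> ME Mu; apply/andP; split; apply/forall_inP => e eM; first exact: ME.
  apply/forall_inP => f fM; apply/implyP => /eqP ef.
  by apply/andP; split; apply/eqP => h; apply: ef; apply: Mu => //; [left|right].
Qed.

Lemma is_matching0 : is_matching E set0.
Proof. by apply/is_matchingP; split=> e; rewrite inE. Qed.

Lemma is_matching_set1 u w : E u w -> is_matching E [set (u, w)].
Proof.
by move=> uw; apply/is_matchingP; split=> [e /set1P -> //|e f /set1P -> /set1P ->].
Qed.

Lemma is_matchingU (S1 : pred U) (S2 : pred W) M1 M2 :
  is_matching E M1 -> is_matching E M2 ->
  (forall e, e \in M1 -> e.1 \in S1 /\ e.2 \in S2) ->
  (forall e, e \in M2 -> e.1 \notin S1 /\ e.2 \notin S2) ->
  is_matching E (M1 :|: M2) /\ #|M1 :|: M2| = #|M1| + #|M2|.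
Proof.
move=> /is_matchingP[E1 U1] /is_matchingP[E2 U2] S12 nS12.
have sep e f : e \in M1 -> f \in M2 -> e.1 != f.1 /\ e.2 != f.2.
  move=> /S12[e1 e2] /nS12[f1 f2].
  by split; apply/eqP => h; [move: f1|move: f2]; rewrite -h ?e1 ?e2.
split.
- apply/is_matchingP; split=> [e /setUP[/E1|/E2] //|e f].
  move=> /setUP[eM|eM] /setUP[fM|fM] ef; [exact: U1| | |exact: U2].
  + by have [n1 n2] := sep _ _ eM fM; case: ef => h; [move: n1|move: n2]; rewrite h eqxx.
  + by have [n1 n2] := sep _ _ fM eM; case: ef => h; [move: n1|move: n2]; rewrite h eqxx.
- rewrite cardsU; suff -> : M1 :&: M2 = set0 by rewrite cards0 subn0.
  apply/setP => e; rewrite !inE; apply/negbTE/andP => -[/sep h /h[]].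
  by rewrite eqxx.
Qed.

Lemma leq_max_matching M : is_matching E M -> #|M| <= max_matching_size E.
Proof.
exact: (@leq_bigmax_cond _ (fun M => is_matching E M) (fun M : {set U * W} => #|M|)).
Qed.

Lemma max_matching_exists :
  exists2 M, is_matching E M & #|M| = max_matching_size E.
Proof.
have : 0 < #|[pred M : {set U * W} | is_matching E M]|.
  by apply/card_gt0P; exists set0; rewrite inE is_matching0.
case/(eq_bigmax_cond (fun M : {set U * W} => #|M|)) => M + maxM.
by rewrite inE => Mm; exists M; rewrite // /max_matching_size maxM.
Qed.

Lemma card_matching_fst M : is_matching E M -> #|[set e.1 | e in M]| = #|M|.
Proof.
by case/is_matchingP => _ Mu; apply: card_in_imset => e f eM fM ef; apply: Mu => //; left.
Qed.

End Matching.

Section Digraph.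
Variables (V : finType) (A : rel V).

Lemma root_no_in_arc r u : is_root A r -> ~~ A u r.
Proof. by move/card0_eq/(_ u); rewrite !inE => ->. Qed.

Lemma card_ancestors_lt u v : acyclic A -> A u v ->
  #|[pred w | connect A w u]| < #|[pred w | connect A w v]|.
Proof.
move=> ac uv; apply/proper_card/properP; split.
  by apply/subsetP => w; rewrite !inE => wu; exact: connect_trans wu (connect1 uv).
by exists v; rewrite !inE ?connect0 //; exact: ac.
Qed.

Lemma branching_matching (T : {set V * V}) :
  (forall e, e \in T -> A e.1 e.2) -> (forall v, #|[pred u | (u, v) \in T]| <= 1) ->
  exists2 M, is_matching (G_of A) M & #|M| = #|[set v | ~~ tree_leaf T v]|.
Proof.
move=> TA Tin; pose child v := odflt v [pick w | (v, w) \in T].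
have childT v : ~~ tree_leaf T v -> (v, child v) \in T.
  rewrite /tree_leaf negb_forall => /existsP[w]; rewrite negbK /child => vw.
  by case: pickP => [//|/(_ w)]; rewrite vw.
exists [set (v, child v) | v in [set v | ~~ tree_leaf T v]]; last first.
  by apply: card_imset => x y [].
apply/is_matchingP; split=> [_ /imsetP[v + ->]|_ _ /imsetP[v + ->] /imsetP[v' + ->]].
  by rewrite inE => /childT /TA.
rewrite !inE => /childT vT /childT v'T /= [-> //|cvv'].
rewrite -cvv' in v'T; have /card_le1_eqP le1 := Tin (child v).
by rewrite (le1 v v').
Qed.

Lemma card_le_matching_bad_leaves (X : {set V}) r T : spanning_tree A r T ->
  #|V| <= max_matching_size (G_of A) + bad_leaves X T + #|X|.
Proof.
case=> TA [Tin _].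
have [|M Mm cM] := @branching_matching T TA; first by move=> v; rewrite Tin; case: (v == r).
have leaves_sub : ~: [set v | ~~ tree_leaf T v] \subset
                  [set v | (v \notin X) && tree_leaf T v] :|: X.
  by apply/subsetP => v; rewrite !inE negbK => ->; case: (v \in X).
have := leq_max_matching Mm; have := cardsC [set v | ~~ tree_leaf T v].
have := subset_leq_card leaves_sub; have := cardsU [set v | (v \notin X) && tree_leaf T v] X.
rewrite /bad_leaves; lia.
Qed.

Lemma parent_spanning_tree r (par : V -> V) :
  acyclic A -> is_root A r -> (forall v, v != r -> A (par v) v) ->
  spanning_tree A r [set e | (e.2 != r) && (e.1 == par e.2)].
Proof.
move=> ac rr Apar; set T := [set e | _].
have inT u v : ((u, v) \in T) = (v != r) && (u == par v) by rewrite inE.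
split; [|split].
- by move=> [u v]; rewrite inT => /andP[vr /eqP ->]; exact: Apar.
- move=> v; case: eqVneq => [->|vr].
    by apply: eq_card0 => u; rewrite !inE eqxx.
  by apply: (@eq_card1 _ (par v)) => u; rewrite !inE vr.
- move=> v; have [n] := ubnP #|[pred w | connect A w v]|; elim: n v => // n IH v lt.
  have [->|vr] := eqVneq v r; first exact: connect0.
  apply: connect_trans (IH (par v) _) (connect1 _); last by rewrite inT vr eqxx.
  by have := card_ancestors_lt ac (Apar v vr); lia.
Qed.

Lemma matching_spanning_tree (X : {set V}) r M :
  acyclic A -> is_root A r -> (forall v, v != r -> exists u, A u v) ->
  (forall v w, v \in X -> ~~ A v w) -> is_matching (G_of A) M ->
  exists T, spanning_tree A r T /\ bad_leaves X T + #|X| + #|M| <= #|V|.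
Proof.
move=> ac rr hin Xo Mm; have [MA Mu] := (is_matchingP _ _).1 Mm; rewrite /G_of in MA.
pose par v := if [pick u | (u, v) \in M] is Some u then u else odflt v [pick u | A u v].
have Apar v : v != r -> A (par v) v.
  move=> vr; rewrite /par; case: pickP => [u uv|_]; first exact: MA _ uv.
  by have [u uv] := hin v vr; case: pickP => [//|/(_ u)]; rewrite uv.
have Mpar e : e \in M -> e.1 = par e.2.
  move=> eM; rewrite /par; case: pickP => [u uM|/(_ e.1)] /=.
    by rewrite [e](Mu _ _ eM uM (or_intror erefl)).
  by rewrite -surjective_pairing eM.
exists [set e | (e.2 != r) && (e.1 == par e.2)].
split; first exact: parent_spanning_tree.
set T := [set e | _].
have bad_sub : [set v | (v \notin X) && tree_leaf T v] \subset ~: (X :|: [set e.1 | e in M]).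
  apply/subsetP => v; rewrite !inE => /andP[/negbTE -> /forallP lv] /=.
  apply/imsetP => -[e eM ev].
  have er : e.2 != r by apply: contraNneq (root_no_in_arc e.1 rr) => <-; exact: MA.
  by move: (lv e.2); rewrite inE er ev (Mpar _ eM) eqxx.
have XM0 : X :&: [set e.1 | e in M] = set0.
  apply/setP => v; rewrite !inE; apply/negbTE/andP => -[vX /imsetP[e eM ev]].
  by move: (Xo v e.2 vX); rewrite ev MA.
have := subset_leq_card bad_sub; have := cardsC (X :|: [set e.1 | e in M]).
have := cardsU X [set e.1 | e in M]; rewrite XM0 cards0 (card_matching_fst Mm).
rewrite /bad_leaves; lia.
Qed.

Definition path_cover (R : rel V) (P : seq (seq V)) : Prop :=
  [/\ forall s, s \in P -> s != [::] /\ sorted R s, uniq (flatten P) &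
      forall v, v \in flatten P].

Lemma path_partitionE P : path_partition A P <-> path_cover A P.
Proof.
split=> [[HP [uP cP]]|[HP uP cP]]; split=> // s /HP.
  by case=> x [s' [-> xs']].
by case: s => [[]|x s' [_ xs']] //; exists x, s'.
Qed.

Lemma sub_path_cover (R R' : rel V) P : subrel R R' -> path_cover R P -> path_cover R' P.
Proof.
move=> RR' [HP uP cP]; split=> // s /HP[sn sR]; split=> //; exact: sub_sorted sR.
Qed.

Lemma size_flatten_path_cover R P : path_cover R P -> size (flatten P) = #|V|.
Proof. by case=> _ uP cP; rewrite -(card_uniqP uP); apply: eq_card. Qed.

Lemma sorted_matching s : uniq s -> sorted A s ->
  exists M, [/\ is_matching (G_of A) M, #|M| = (size s).-1 &
                forall e, e \in M -> e.1 \in s /\ e.2 \in behead s].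
Proof.
elim: s => [|x [|y s] IH];
  try by exists set0; split=> [|//|e]; rewrite ?cards0 ?inE //; exact: is_matching0.
rewrite /= => /andP[xys uys] /andP[xy ys].
have [M [Mm cM HM]] := IH uys ys; have yns : y \notin s by case/andP: uys.
have xy_on e : e \in [set (x, y)] -> e.1 \in pred1 x /\ e.2 \in pred1 y.
  by move/set1P ->; rewrite !inE.
have M_off_xy e : e \in M -> e.1 \notin pred1 x /\ e.2 \notin pred1 y.
  move=> /HM /= [e1 e2]; rewrite !inE.
  by split; apply/eqP => h; [move: xys|move: yns]; rewrite -h ?e1 ?e2.
have [xyMm cxyM] := is_matchingU (S1 := pred1 x) (S2 := pred1 y)
  (is_matching_set1 (E := G_of A) xy) Mm xy_on M_off_xy.
exists ([set (x, y)] :|: M); split=> //; first by rewrite cxyM cards1 cM.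
move=> e /setUP[/set1P -> | /HM /= [e1 e2]]; first by split; rewrite /= mem_head.
by split; rewrite in_cons ?e1 ?e2 orbT.
Qed.

Lemma sorted_paths_matching P :
  (forall s, s \in P -> s != [::] /\ sorted A s) -> uniq (flatten P) ->
  exists M, [/\ is_matching (G_of A) M, #|M| + size P = size (flatten P) &
                forall e, e \in M -> e.1 \in flatten P /\ e.2 \in flatten P].
Proof.
elim: P => [|s P IH] HP.
  by exists set0; split=> [|//|e]; rewrite ?cards0 ?inE //; exact: is_matching0.
rewrite /= cat_uniq => /and3P[us sP uP].
have [sn ss] := HP s (mem_head _ _).
have [Ms [Msm cMs HMs]] := sorted_matching us ss.
have [MP [MPm cMP HMP]] := IH (fun s' s'P => HP s' (mem_behead (s := s :: P) s'P)) uP.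
have Hs e : e \in Ms -> e.1 \in s /\ e.2 \in s.
  by move=> /HMs[e1 e2]; split=> //; exact: mem_behead.
have notin_s v : v \in flatten P -> v \notin s by move=> vP; apply: (hasPn sP).
have MP_off_s e : e \in MP -> e.1 \notin s /\ e.2 \notin s.
  by move=> /HMP[e1 e2]; split; exact: notin_s.
have [Mm cM] := is_matchingU (S1 := mem s) (S2 := mem s) Msm MPm Hs MP_off_s.
exists (Ms :|: MP); split=> //.
- have : 0 < size s by case: (s) sn.
  by move: cMP; rewrite cM cMs /= size_cat; lia.
- by move=> e /setUP[/Hs|/HMP] [e1 e2]; rewrite !mem_cat ?e1 ?e2 ?orbT.
Qed.

Lemma path_cover_matching P : path_cover A P ->
  exists2 M, is_matching (G_of A) M & #|M| + size P = #|V|.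
Proof.
move=> cov; have [HP uP _] := cov.
have [M [Mm cM _]] := sorted_paths_matching HP uP.
by exists M; rewrite // cM (size_flatten_path_cover cov).
Qed.

Lemma path_cover_join (R R' : rel V) P p u w q :
  path_cover R P -> rcons p u \in P -> w :: q \in P -> rcons p u != w :: q ->
  subrel R R' -> R' u w ->
  exists P', path_cover R' P' /\ (size P').+1 = size P.
Proof.
move=> [HP uP cP] pP qP pq RR' uw.
have qP' : w :: q \in rem (rcons p u) P.
  by move: qP; rewrite (perm_mem (perm_to_rem pP)) in_cons eq_sym (negbTE pq).
set P' := rem (w :: q) (rem (rcons p u) P).
have pe : perm_eq P [:: rcons p u, w :: q & P'].
  by apply: perm_trans (perm_to_rem pP) _; rewrite perm_cons perm_to_rem.
have pf : perm_eq (flatten P) (flatten ((rcons p u ++ w :: q) :: P')).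
  by apply: perm_trans (perm_flatten pe) _; rewrite /= -catA.
exists ((rcons p u ++ w :: q) :: P'); split; last by rewrite (perm_size pe).
split; last 2 first.
- by rewrite -(perm_uniq pf).
- by move=> v; rewrite -(perm_mem pf).
move=> s; rewrite in_cons => /orP[/eqP->|sP']; last first.
  have [sn sR] : s != [::] /\ sorted R s by apply: HP; rewrite (perm_mem pe) !inE sP' !orbT.
  by split=> //; exact: sub_sorted sR.
split; first by case: (rcons p u).
have [_ /(sub_sorted RR') pR'] := HP _ pP; have [_ /(sub_sorted RR') qR'] := HP _ qP.
rewrite sorted_cat_cons (qR' : path R' w q) andbT.
case: p pR' {pP pq qP' pe pf P'} => [|x p] /= pR'; first by rewrite uw.
by rewrite rcons_path last_rcons pR' uw.
Qed.

Lemma matching_edges_path_cover M (es : seq (V * V)) :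
  acyclic A -> is_matching (G_of A) M -> uniq es -> {subset es <= M} ->
  exists P, path_cover (fun x y => (x, y) \in es) P /\ size P + size es = #|V|.
Proof.
move=> ac /is_matchingP[MA Mu]; rewrite /G_of in MA.
elim: es => [|[u w] es IH] /=.
  move=> _ _; exists [seq [:: v] | v <- enum V].
  have flat1 : flatten [seq [:: v] | v <- enum V] = enum V by elim: (enum V) => //= v s ->.
  by split; [split=> [_ /mapP[v _ ->] //||v]; rewrite flat1 ?enum_uniq ?mem_enum
            |rewrite size_map addn0 cardE].
case/andP => uw_es ues sub.
have sub' : {subset es <= M} by move=> e e_es; apply: sub; rewrite in_cons e_es orbT.
have [P [cov sP]] := IH ues sub'; have [HP _ cP] := cov.
have uwM : (u, w) \in M by apply: sub; exact: mem_head.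
set R := fun x y => (x, y) \in es.
have u_last z : ~~ R u z.
  apply/negP => uz; case: (Mu _ _ (sub' _ uz) uwM (or_introl erefl)) => zw.
  by move: uz; rewrite /R zw (negbTE uw_es).
have w_head z : ~~ R z w.
  apply/negP => zw; case: (Mu _ _ (sub' _ zw) uwM (or_intror erefl)) => zu.
  by move: zw; rewrite /R zu (negbTE uw_es).
have [p0 p0P up0] := flattenP (cP u); have [_ p0R] := HP _ p0P.
have [p Ep] := mem_sorted_last p0R up0 u_last; rewrite Ep in p0P.
have [q0 q0P wq0] := flattenP (cP w); have [_ q0R] := HP _ q0P.
have [q Eq] := mem_sorted_head q0R wq0 w_head; rewrite Eq in q0P q0R.
have pq : rcons p u != w :: q.
  apply: contraTneq (ac u w (MA (u, w) uwM)) => pq; rewrite negbK.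
  have qA : path A w q by apply: sub_sorted q0R => x y /sub' /MA.
  by apply: (path_connect qA); rewrite -pq mem_rcons mem_head.
have [|P' [cov' sP']] := path_cover_join (R' := fun x y => (x, y) \in (u, w) :: es)
  cov p0P q0P pq _ (mem_head _ _).
  by move=> x y xy; rewrite in_cons xy orbT.
by exists P'; split=> //; move: sP sP'; rewrite /=; lia.
Qed.

Lemma matching_path_cover M : acyclic A -> is_matching (G_of A) M ->
  exists P, path_cover A P /\ size P + #|M| = #|V|.
Proof.
move=> ac Mm; have [MA _] := (is_matchingP _ _).1 Mm.
have enumM : {subset enum M <= M} by move=> e; rewrite mem_enum.
have [P [cov sP]] := matching_edges_path_cover ac Mm (enum_uniq M) enumM.
exists P; split; last by rewrite cardE.
by apply: sub_path_cover cov => x y; rewrite mem_enum => /MA.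
Qed.

End Digraph.

Section Attach.
Variables (V : finType) (A : rel V) (X : {set V}) (a b : V).

Local Notation N := (Net A X).
Local Notation A' := (@attach_A N a b).
Local Notation X' := (@nX (@attach N a b)).

Lemma is_root_attach z : A a b -> is_root A' z <-> exists2 r, z = inl r & is_root A r.
Proof.
move=> ab; split=> [|[r -> rr]].
- case: z => [r|[|]] rz; last 2 first.
  + by move: (root_no_in_arc (inr false) rz).
  + by move: (root_no_in_arc (inl a) rz); rewrite /= eqxx.
  exists r => //; apply: eq_card0 => u; rewrite !inE; apply/negbTE/negP => ur.
  have [[_ rb]|ne] := eqVneq (u, r) (a, b).
    by move: (root_no_in_arc (inr false) rz); rewrite /= rb eqxx.
  by move: (root_no_in_arc (inl u) rz) ne; rewrite /= ur xpair_eqE => /negbNE ->.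
- apply: eq_card0 => -[x|[|]]; rewrite !inE //=.
    by rewrite (negbTE (root_no_in_arc x rr)).
  by apply/negbTE; apply: contraTneq ab => <-; exact: root_no_in_arc.
Qed.

Lemma attach_out_arcs : (forall v, v \notin X -> exists w, A v w) ->
  forall z, z \notin X' -> exists y, A' z y.
Proof.
move=> Xout [x|[|]]; rewrite !inE /=.
- rewrite (mem_imset _ _ (@inl_inj _ _)) orbF => /Xout[y xy].
  have [->|_] := eqVneq x a; first by exists (inr false).
  by exists (inl y); rewrite /= xy.
- by rewrite eqxx orbT.
- by move=> _; exists (inr true).
Qed.

Definition attach_tree (T : {set V * V}) : {set (V + bool) * (V + bool)} :=
  [set e | match e with
           | (inl x, inl y) => (x, y) \in T
           | (inl x, inr false) => x == a
           | (inr false, inr true) => true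
           | _ => false end].

Lemma attach_spanning_tree r T : is_root A r -> spanning_tree A r T -> tree_leaf T a ->
  spanning_tree A' (inl r) (attach_tree T).
Proof.
move=> rr [TA [Tin Tc]] /forallP aleaf.
split; [|split].
- move=> [[x|[|]] [y|[|]]]; rewrite inE //= => xy.
  rewrite (TA _ xy) /=; apply/negP => /andP[/eqP xa _].
  by move: (aleaf y); rewrite -xa xy.
- move=> [y|[|]].
  + rewrite (card_pred_inl (P := fun z => (z, inl y) \in attach_tree T)); last by case; rewrite inE.
    by rewrite -(Tin y); apply: eq_card => x; rewrite !inE.
  + by rewrite (@eq_card1 _ (inr false)) // => z; rewrite !inE; case: z => [x|[|]].
  + by rewrite (@eq_card1 _ (inl a)) // => z; rewrite !inE; case: z => [x|[|]].
- have Tc' y : connect (fun x y => (x, y) \in attach_tree T) (inl r) (inl y).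
    apply: (homo_connect (f := inl) (e1 := fun x y => (x, y) \in T)) (Tc y) => x z xz.
    by apply: connect1; rewrite inE.
  have rf : connect (fun x y => (x, y) \in attach_tree T) (inl r) (inr false).
    by apply: connect_trans (Tc' a) (connect1 _); rewrite inE.
  by move=> [y|[|]] //; apply: connect_trans rf (connect1 _); rewrite inE.
Qed.

Lemma bad_leaves_attach T : tree_leaf T a -> a \notin X ->
  bad_leaves X' (attach_tree T) + 1 = bad_leaves X T.
Proof.
move=> aleaf aX; rewrite /bad_leaves.
have leafE x : tree_leaf (attach_tree T) (inl x) = (x != a) && tree_leaf T x.
  apply/forallP/andP => [xleaf|[xa /forallP xleaf] [y|[|]]]; rewrite ?inE //=.
  split; first by move: (xleaf (inr false)); rewrite inE.
  by apply/forallP => y; move: (xleaf (inl y)); rewrite inE.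
have -> : [set z | (z \notin X') && tree_leaf (attach_tree T) z] =
          inl @: ([set x | (x \notin X) && tree_leaf T x] :\ a).
  apply/setP => -[x|[|]]; rewrite !inE /= ?(mem_imset _ _ (@inl_inj _ _)) /= ?orbF.
  + by rewrite leafE !inE andbCA.
  + by rewrite eqxx orbT /=; apply/esym/imsetP => -[].
  + have -> : tree_leaf (attach_tree T) (inr false) = false.
      by apply/negbTE/forallPn; exists (inr true); rewrite inE.
    by rewrite andbF; apply/esym/imsetP => -[].
rewrite card_imset; last exact: inl_inj.
by rewrite [in RHS](cardsD1 a) inE aX aleaf addnC.
Qed.

(* The arc (a, b) is kept exactly when b hangs below the subdivision vertex. *)
Definition detach_tree (T' : {set (V + bool) * (V + bool)}) : {set V * V} :=
  [set e | ((inl e.1, inl e.2) \in T') || ((e == (a, b)) && ((inr false, inl b) \in T'))].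

Lemma detach_spanning_tree r T' : A a b -> spanning_tree A' (inl r) T' ->
  spanning_tree A r (detach_tree T').
Proof.
move=> ab [T'A [T'in T'c]].
have T'A' x y : (x, y) \in T' -> A' x y by move/T'A.
have nopar u : (u, inl r) \notin T'.
  by have := T'in (inl r); rewrite eqxx => /card0_eq/(_ u); rewrite !inE => ->.
have T'par z : z != inl r -> exists u, forall w, ((w, z) \in T') = (w == u).
  move=> zr; have /card1P[u Hu] : #|[pred u | (u, z) \in T']| == 1 by rewrite T'in (negbTE zr).
  by exists u => w; move: (Hu w); rewrite !inE.
split; [|split].
- by move=> [x y]; rewrite inE /= => /orP[/T'A' /= /andP[]|/andP[/eqP[-> ->]]].
- move=> v; case: eqVneq => [->|vr].
    apply: eq_card0 => x; rewrite !inE /= (negbTE (nopar _)) /=.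
    by apply/negP => /andP[/eqP[_ rb] h]; move: (nopar (inr false)); rewrite rb h.
  have [[x|[|]] Hu] : exists u, forall w, ((w, inl v) \in T') = (w == u).
    by apply: T'par; rewrite (inj_eq inl_inj).
  + apply: (@eq_card1 _ x) => y; rewrite !inE /= Hu (inj_eq inl_inj).
    case: eqP => //= _; apply/negP => /andP[/eqP[_ vb] h].
    by move: (Hu (inr false)); rewrite vb h.
  + by have := Hu (inr true); rewrite eqxx => /T'A'.
  + have := Hu (inr false); rewrite eqxx => h; have /eqP vb := T'A' _ _ h; subst v.
    apply: (@eq_card1 _ a) => y; rewrite !inE /= Hu /= h.
    by rewrite xpair_eqE eqxx !andbT.
- pose f (z : V + bool) := if z is inl x then x else a.
  have f_homo : {homo f : x y / (x, y) \in T' >->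
                   connect (fun x y => (x, y) \in detach_tree T') x y}.
    move=> [x|[|]] [y|[|]] xy; have /= xy' := T'A' _ _ xy; rewrite //=.
    + by apply: connect1; rewrite inE /= xy.
    + by rewrite (eqP xy'); exact: connect0.
    + by move/eqP: xy' xy => -> ab'; apply: connect1; rewrite inE eqxx ab' orbT.
  by move=> v; exact: (homo_connect f_homo (T'c (inl v))).
Qed.

Lemma bad_leaves_detach (T' : {set (V + bool) * (V + bool)}) :
  (forall e, e \in T' -> A' e.1 e.2) -> bad_leaves X (detach_tree T') <= bad_leaves X' T' + 1.
Proof.
move=> T'A; set S := [set v | inl v \in [set z | (z \notin X') && tree_leaf T' z]].
have bad_sub : [set v | (v \notin X) && tree_leaf (detach_tree T') v] \subset a |: S.
  apply/subsetP => v; rewrite !inE => /andP[vX /forallP vleaf].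
  have [//|va] := eqVneq v a; rewrite /= (mem_imset _ _ (@inl_inj _ _)) /= orbF vX.
  apply/forallP => -[y|[|]]; apply/negP.
  + by move=> h; move: (vleaf y); rewrite inE /= h.
  + by move/T'A.
  + by move/T'A => /= /eqP va'; rewrite va' eqxx in va.
have : #|S| <= bad_leaves X' T'.
  rewrite /bad_leaves -(card_imset S (@inl_inj _ bool)); apply: subset_leq_card.
  by apply/subsetP => z /imsetP[v]; rewrite inE => + ->.
have := subset_leq_card bad_sub; have := cardsU1 a S.
by rewrite /bad_leaves; case: (a \notin S) => /=; lia.
Qed.

End Attach.

Lemma attached_bad_leaves j N N' : attached j N N' -> tree_based N' ->
  exists r T, [/\ is_root (@nA N) r, spanning_tree (@nA N) r T & bad_leaves (@nX N) T <= j].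
Proof.
elim=> {j N N'} [N|k [V A X] N' a b ab _ IH] tb.
  have [r [T [rr [ST Tleaves]]]] := tb; exists r, T; split=> //.
  rewrite leqn0; apply/eqP/eq_card0 => v; rewrite !inE.
  by apply/negP => /andP[/negbTE vX /Tleaves]; rewrite vX.
have [_ [T' [/(is_root_attach _ ab)[r -> rr] ST' b']]] := IH tb.
exists r, (detach_tree a b T'); split=> //; first exact: detach_spanning_tree ab ST'.
by apply: leq_trans (bad_leaves_detach ST'.1) _; rewrite addn1.
Qed.

Lemma attached_of_bad_leaves k N r T :
  (forall v, v \notin @nX N -> exists w, @nA N v w) ->
  is_root (@nA N) r -> spanning_tree (@nA N) r T -> bad_leaves (@nX N) T = k ->
  exists N', attached k N N' /\ tree_based N'.
Proof.
elim: k N r T => [|k IH] [V A X] r T /= Xout rr ST bT.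
  exists (Net A X); split; first exact: attached0.
  exists r, T; split=> //; split=> // v vleaf; apply/negPn/negP => vX.
  by have := card0_eq bT v; rewrite !inE vX vleaf.
have /card_gt0P[v] : 0 < bad_leaves X T by rewrite bT.
rewrite inE => /andP[vX vleaf]; have [w vw] := Xout v vX.
have rr' : is_root (@attach_A (Net A X) v w) (inl r) by apply/(is_root_attach _ vw); exists r.
have [|N' [att tb]] := IH (@attach (Net A X) v w) (inl r) (attach_tree v T)
  (attach_out_arcs Xout) rr' (attach_spanning_tree X w rr ST vleaf).
  by have := bad_leaves_attach A w vleaf vX; lia.
by exists N'; split=> //; exact: (@attachedS k (Net A X) N' v w vw att).
Qed.

Lemma phylo_net_arcs (V : finType) (A : rel V) (X : {set V}) : phylo_net A X ->
  [/\ acyclic A, exists2 r, is_root A r & (forall v, v != r -> exists u, A u v),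
      forall v w, v \in X -> ~~ A v w & forall v, v \notin X -> exists w, A v w].
Proof.
case=> _ [ac [r [rootE shape]]]; split=> //.
  exists r => [|v vr]; first exact/rootE.
  have : indeg A v != 0 by apply: contra vr => /eqP/rootE ->.
  by rewrite -lt0n => /card_gt0P[u]; rewrite inE; exists u.
- case: shape => [[V1 _]|[_ [outX _]]] v w vX.
    apply/negP => vw; have /card_le1_eqP le1 : #|V| <= 1 by rewrite V1.
    by move: (ac _ _ vw); rewrite (le1 w v) ?connect0.
  by move: vX; rewrite outX => /eqP/card0_eq/(_ w); rewrite !inE => ->.
- case: shape => [[_ ->]|[_ [outX _]]] v; first by rewrite inE.
  by rewrite outX -lt0n => /card_gt0P[w]; rewrite inE; exists w.
Qed.

Theorem theorem5 (V : finType) (A : rel V) (X : {set V}) :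
  phylo_net A X ->
  let n := (#|V| - #|X|) - max_matching_size (G_of A) in
  l_val A X n /\
  (exists d, d_val A d /\ d - #|X| = n) /\
  t_val A X n.
Proof.
case/phylo_net_arcs => ac [r rr hin] Xo Xout n.
have [M Mm cM] := max_matching_exists (G_of A).
have n_le r' T' : spanning_tree A r' T' -> n <= bad_leaves X T'.
  by move/(card_le_matching_bad_leaves X); rewrite /n; lia.
have [T [ST bT]] := matching_spanning_tree ac rr hin Xo Mm.
have bTn : bad_leaves X T = n by have := n_le _ _ ST; rewrite /n; lia.
split; [|split].
- split=> [|j [r' [T' [_ [ST' <-]]]]]; [by exists r, T | exact: n_le ST'].
- have [P [cov sP]] := matching_path_cover ac Mm.
  exists (#|V| - max_matching_size (G_of A)); split; last by rewrite /n; lia.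
  split=> [|j [P' [/path_partitionE cov' <-]]].
    by exists P; split; [apply/path_partitionE | lia].
  by have [M' M'm cM'] := path_cover_matching cov'; have := leq_max_matching M'm; lia.
- split=> [|j [N' [att tb]]].
    exact: (attached_of_bad_leaves (N := Net A X) Xout rr ST bTn).
  have [r' [T' [_ ST' bT']]] := attached_bad_leaves att tb.
  exact: leq_trans (n_le _ _ ST') bT'.
Qed.
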